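(* Let $T$ be a torus and $X$ a finite $T$-CW complex. For each $(q,u)\in\mathbb D^\times\times T_{\mathbb C}$ we have an equality \[ L(S^1\wedge X_+)^{q,u}=S^1\wedge LX^{q,u}_+ \] of subsets of $L(S^1\wedge X_+)$.
   Context: $\mathbb T=U(1)$, $T$ torus, $\check T=\mathrm{Hom}(\mathbb T,T)$, $T_{\mathbb C}=\check T\otimes\mathbb C^\times$, $\mathbb D^\times=\{z\in\mathbb C:0<|z|<1\}$. For a $T$-space $Z$, $LZ=\mathrm{Map}(\mathbb T,Z)$ with $\mathbb T\times T$ acting by $((r,u)\cdot\gamma)(s)=u\cdot\gamma(r^{-1}s)$. For $(q,u)$, $T(q,u)$ is the intersection of all closed subgroups $H\subset\mathbb T\times T$ with $(q,u)\in H_{\mathbb C}=\mathrm{Hom}(\hat H,\mathbb C^\times)\subset\mathbb C^\times\times T_{\mathbb C}$, and $W^{q,u}$ denotes the $T(q,u)$-fixed subspace of a $\mathbb T\times T$-space $W$. $S^1$ has trivial $T$-action, $X_+=X\sqcup\{\mathrm{pt}\}$, and $S^1\wedge LX^{q,u}_+$ is regarded as a subset of $L(S^1\wedge X_+)$ via $[z,\gamma]\mapsto(s\mapsto[z,\gamma(s)])$, the basepoint going to the constant loop at the basepoint. *)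

From HB Require Import structures.
From mathcomp Require Import all_boot all_order all_algebra.
From mathcomp Require Import all_classical all_reals all_analysis.
From mathcomp Require Import complex.
Set Implicit Arguments. Unset Strict Implicit. Unset Printing Implicit Defensive.
Import Order.TTheory GRing.Theory Num.Theory.
Import numFieldTopology.Exports numFieldNormedType.Exports.
Local Open Scope classical_set_scope.
Local Open Scope ring_scope.

(*  * The circle 𝕋 = U(1) is parametrized by R via s |-> exp(2 pi i s), i.e. *)
(*    𝕋 = R/Z; the rank-n torus T is R^n/Z^n, parametrized by 'rV[R]_n.     *)
(*    A T-space is a space with a continuous action of R^n which is        *)
(*    trivial on Z^n.  A loop Map(𝕋, Z) is a continuous 1-periodic map       *)
(*    R -> Z.  The group 𝕋 x T is parametrized by R * 'rV[R]_n, its closed   *)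
(*    subgroups by closed subgroups of R * 'rV[R]_n containing Z^(1+n).     *)
(*  * Characters of 𝕋 x T are indexed by (a0, a) in Z x Z^n:                *)
(*    chi(theta) = exp(2 pi i (a0 theta_0 + a . theta)).                    *)
(*    T_C = Hom(𝕋, T) (x) C^x = (C^x)^n, and chi extends to                 *)
(*    (q,u) |-> q^a0 * prod_i u_i^a_i on C^x x T_C.                         *)

Definition intvec (R : realType) (n : nat) (v : 'rV[R]_n) : Prop :=
  forall i, v ord0 i \is a Num.int.

Definition torus_action (R : realType) (n : nat) (X : topologicalType)
    (act : 'rV[R]_n -> X -> X) : Prop :=
  [/\ continuous (fun p : 'rV[R]_n * X => act p.1 p.2),
      forall x, act 0 x = x,
      forall v w x, act (v + w) x = act v (act w x)
    & forall v x, intvec v -> act v x = x].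

(* closed subgroups of T, as closed subgroups of R^n containing Z^n *)
Definition closed_subgroup_T (R : realType) (n : nat) (H : set 'rV[R]_n) : Prop :=
  [/\ closed H, forall v, intvec v -> H v & forall v w, H v -> H w -> H (v - w)].

Definition disk (R : realType) (k : nat) : set 'rV[R]_k :=
  [set d | \sum_(i < k) d ord0 i ^+ 2 <= 1].
Definition odisk (R : realType) (k : nat) : set 'rV[R]_k :=
  [set d | \sum_(i < k) d ord0 i ^+ 2 < 1].
Definition sphere (R : realType) (k : nat) : set 'rV[R]_k :=
  [set d | \sum_(i < k) d ord0 i ^+ 2 = 1].

(* Finite T-CW complex.  An equivariant cell T/H x D^k -> X is given by a  *)
(* continuous map phi : D^k -> X^H, via (tH, d) |-> t . phi d.  A Hausdorff *)
(* T-space with finitely many such cells whose open cells partition X (the  *)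
(* characteristic maps being injective on T/H x int D^k) and whose boundary *)
(* spheres land in cells of lower dimension is a finite T-CW complex (the   *)
(* weak topology condition is automatic for finitely many compact cells).  *)
Definition finite_TCW (R : realType) (n : nat) (X : topologicalType)
    (act : 'rV[R]_n -> X -> X) : Prop :=
  hausdorff_space X /\
  exists (m : nat) (k : 'I_m -> nat) (H : 'I_m -> set 'rV[R]_n)
         (phi : forall j : 'I_m, 'rV[R]_(k j) -> X),
    (forall j, closed_subgroup_T (H j)) /\
    (forall j, {within @disk R (k j), continuous (phi j)}) /\
    (forall j d h, @disk R (k j) d -> H j h -> act h (phi j d) = phi j d) /\
    (forall x, exists j t d, @odisk R (k j) d /\ x = act t (phi j d)) /\
    (forall j j' t t' d d', @odisk R (k j) d -> @odisk R (k j') d' ->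
        act t (phi j d) = act t' (phi j' d') -> j = j') /\
    (forall j t t' d d', @odisk R (k j) d -> @odisk R (k j) d' ->
        act t (phi j d) = act t' (phi j d') -> d = d' /\ H j (t - t')) /\
    (forall j d, @sphere R (k j) d ->
        exists j' t d', (k j' < k j)%N /\ @odisk R (k j') d' /\
                        phi j d = act t (phi j' d')).

Definition is_loop (R : realType) (Z : topologicalType) (g : R -> Z) : Prop :=
  continuous g /\ forall s, g (s + 1) = g s.

Definition closed_subgroup_TT (R : realType) (n : nat)
    (H : set (R * 'rV[R]_n)) : Prop :=
  [/\ closed H,
      forall th : R * 'rV[R]_n, th.1 \is a Num.int -> intvec th.2 -> H th
    & forall th th', H th -> H th' -> H (th - th')].

(* the character (a0, a) in additive coordinates *)
Definition char_exponent (R : realType) (n : nat) (a0 : int) (a : 'rV[int]_n)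
    (th : R * 'rV[R]_n) : R :=
  a0%:~R * th.1 + \sum_(i < n) (a ord0 i)%:~R * th.2 ord0 i.

(* (q,u) \in H_C = Hom(H^, C^x) ⊂ Hom((𝕋 x T)^, C^x) = C^x x T_C: the      *)
(* homomorphism chi |-> chi(q,u) kills every character trivial on H.       *)
Definition in_HC (R : realType) (n : nat) (H : set (R * 'rV[R]_n))
    (q : R[i]) (u : 'rV[R[i]]_n) : Prop :=
  forall (a0 : int) (a : 'rV[int]_n),
    (forall th, H th -> char_exponent a0 a th \is a Num.int) ->
    q ^ a0 * \prod_(i < n) (u ord0 i) ^ (a ord0 i) = 1.

Definition Tqu (R : realType) (n : nat) (q : R[i]) (u : 'rV[R[i]]_n) :
    set (R * 'rV[R]_n) :=
  [set th | forall H, closed_subgroup_TT H -> in_HC H q u -> H th].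

Definition loop_act (R : realType) (n : nat) (Z : Type)
    (act : 'rV[R]_n -> Z -> Z) (th : R * 'rV[R]_n) (g : R -> Z) : R -> Z :=
  fun s => act th.2 (g (s - th.1)).

Definition Lfix (R : realType) (n : nat) (Z : topologicalType)
    (act : 'rV[R]_n -> Z -> Z) (q : R[i]) (u : 'rV[R[i]]_n) : set (R -> Z) :=
  [set g | is_loop g /\ forall th, Tqu q u th -> loop_act act th g = g].

(* Points: the basepoint (None) and [z, x] with z in S^1 minus the          *)
(* basepoint, z represented by its parameter in ]0,1[.                      *)
Definition smash (R : realType) (X : topologicalType) : Type :=
  option ({t : R | 0 < t < 1} * X).

HB.instance Definition _ (R : realType) (X : topologicalType) :=
  Choice.on (smash R X).

(* the quotient map S^1 x X -> S^1 ∧ X_+ (S^1 parametrized by R) *)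
Definition smash_pi (R : realType) (X : topologicalType) (p : R * X) : smash R X :=
  match insub (p.1 - (Num.floor p.1)%:~R) : option {t : R | 0 < t < 1} with
  | Some t => Some (t, p.2)
  | None => None
  end.

(* quotient topology: U open iff its preimage in S^1 x X is open (the part *)
(* S^1 x {+} of S^1 x X_+ imposes no condition), and the quotient map       *)
(* R x X -> S^1 x X is itself a quotient map                                *)
Definition smash_open (R : realType) (X : topologicalType) (U : set (smash R X)) : Prop :=
  open (smash_pi (X := X) @^-1` U).

Lemma smash_openT (R : realType) (X : topologicalType) : smash_open [set: smash R X].
Proof. by rewrite /smash_open preimage_setT; exact: openT. Qed.

Lemma smash_openI (R : realType) (X : topologicalType) :
  setI_closed (@smash_open R X).
Proof. by move=> A B oA oB; rewrite /smash_open preimage_setI; exact: openI. Qed.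

Lemma smash_open_bigU (R : realType) (X : topologicalType) (I : Type)
    (f : I -> set (smash R X)) :
  (forall i, smash_open (f i)) -> smash_open (\bigcup_i f i).
Proof.
by move=> oF; rewrite /smash_open preimage_bigcup; apply: bigcup_open => i _; exact: oF.
Qed.

HB.instance Definition _ (R : realType) (X : topologicalType) :=
  isOpenTopological.Build (smash R X) (@smash_openT R X) (@smash_openI R X)
    (@smash_open_bigU R X).

Definition smash_act (R : realType) (n : nat) (X : topologicalType)
    (act : 'rV[R]_n -> X -> X) (v : 'rV[R]_n) (y : smash R X) : smash R X :=
  match y with
  | Some (t, x) => Some (t, act v x)
  | None => None
  end.

(* S^1 ∧ (LX^{q,u})_+ as a subset of L(S^1 ∧ X_+):                          *)
(* [z, g] |-> (s |-> [z, g s]), and the basepoint |-> the constant loop.     *)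
Definition smash_Lfix (R : realType) (n : nat) (X : topologicalType)
    (act : 'rV[R]_n -> X -> X) (q : R[i]) (u : 'rV[R[i]]_n) : set (R -> smash R X) :=
  [set g | g = (fun _ => None) \/
           exists (z : R) (gam : R -> X),
             Lfix act q u gam /\ g = (fun s => smash_pi (z, gam s))].

(* For 0 < |q| < 1 the group T(q,u) contains the line {(s, s λ) | s ∈ R},
   λ_i = ln|u_i| / ln|q|: taking ln|.| of q^a0 ∏ u_i^a_i = 1 shows that every
   character killing (q,u) is trivial on the line, and by duality for closed
   subgroups H ⊇ Z^(1+n) of R^(1+n) (a point outside H is detected by an
   integral character trivial on H) the line lies in every closed H with
   (q,u) ∈ H_C.  So a loop g fixed by T(q,u) satisfies g(s) = (s λ)·g(0).  As
   T acts trivially on the S^1-coordinate, g is the constant loop at the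
   basepoint or s |-> [z, (s λ)·x], and the loop s |-> (s λ)·x is again fixed.

   Duality goes by induction on the number of coordinate directions along
   which H is invariant, replacing H by (H ∩ {x_j = 0}) + R e_j.  H is
   recovered through its image in the j-th coordinate, a closed subgroup of R
   containing Z, hence R or (1/N) Z; in the first case a.x mod Z is, on H, a
   continuous character of x_j, hence x_j |-> c x_j with c an integer. *)

From mathcomp Require Import all_boot all_order all_algebra.
From mathcomp Require Import all_classical all_reals all_analysis.
From mathcomp Require Import complex.
From mathcomp Require Import ring lra.
Import Order.TTheory GRing.Theory Num.Theory.
Import numFieldTopology.Exports numFieldNormedType.Exports.
Local Open Scope classical_set_scope.
Local Open Scope ring_scope.
Set Implicit Arguments. Unset Strict Implicit. Unset Printing Implicit Defensive.

Section SubgroupSet.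
Variables (G : zmodType) (S : set G).
Hypotheses (S0 : S 0) (SB : forall x y, S x -> S y -> S (x - y)).

Lemma subgroup_setN x : S x -> S (- x).
Proof. by move=> Sx; rewrite -sub0r; exact: SB. Qed.

Lemma subgroup_setD x y : S x -> S y -> S (x + y).
Proof. by move=> Sx Sy; rewrite -[y]opprK; apply: SB => //; exact: subgroup_setN. Qed.

Lemma subgroup_setMz x (k : int) : S x -> S (x *~ k).
Proof.
move=> Sx; have SMn p : S (x *+ p).
  by elim: p => [|p ih]; rewrite ?mulr0n // mulrS; exact: subgroup_setD.
by case: k => p; rewrite ?NegzE ?mulrNz; [|apply: subgroup_setN]; exact: SMn.
Qed.

End SubgroupSet.

Section IntegralForms.
Variables (R : realType) (m : nat).
Implicit Types (x y : 'rV[R]_m) (a b : 'rV[int]_m).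

Definition zdot a x : R := \sum_i (a ord0 i)%:~R * x ord0 i.

Lemma zdotD a x y : zdot a (x + y) = zdot a x + zdot a y.
Proof. by rewrite /zdot -big_split; apply: eq_bigr => i _; rewrite mxE mulrDr. Qed.

Lemma zdotB a x y : zdot a (x - y) = zdot a x - zdot a y.
Proof. by rewrite /zdot -sumrB; apply: eq_bigr => i _; rewrite !mxE mulrBr. Qed.

Lemma zdotZ a (k : R) x : zdot a (k *: x) = k * zdot a x.
Proof. by rewrite /zdot mulr_sumr; apply: eq_bigr => i _; rewrite mxE mulrCA. Qed.

Lemma zdotBl a b x : zdot (a - b) x = zdot a x - zdot b x.
Proof. by rewrite /zdot -sumrB; apply: eq_bigr => i _; rewrite !mxE intrB mulrBl. Qed.

Lemma zdot_delta a j : zdot a (delta_mx 0 j) = (a ord0 j)%:~R.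
Proof.
rewrite /zdot (bigD1 j) //= big1 ?addr0 => [|i /negPf ij]; rewrite !mxE ?eqxx ?ij.
  by rewrite mulr1.
by rewrite mulr0.
Qed.

Lemma zdot_deltal (c : int) j x : zdot (c *: delta_mx 0 j) x = c%:~R * x ord0 j.
Proof.
rewrite /zdot (bigD1 j) //= big1 ?addr0 => [|i /negPf ij]; rewrite !mxE ?eqxx ?ij.
  by rewrite mulr1.
by rewrite mulr0 mul0r.
Qed.

Lemma zdot_int a x : intvec x -> zdot a x \is a Num.int.
Proof. by move=> Zx; apply: rpred_sum => i _; rewrite rpredM ?rpred_int ?Zx. Qed.

Definition annihilates (H : set 'rV[R]_m) a := forall x, H x -> zdot a x \is a Num.int.

Definition int_separated (H : set 'rV[R]_m) y :=
  exists a, annihilates H a /\ zdot a y \isn't a Num.int.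

Lemma continuous_zdot a : continuous (zdot a).
Proof.
apply: (continuous_big add_continuous) => i _.
by move=> x; apply: continuousM; [exact: cst_continuous | exact: coord_continuous].
Qed.

End IntegralForms.

Definition near_int (R : realType) (eps x : R) : Prop :=
  exists k : int, `|x - k%:~R| < eps.

Lemma int_norm_lt1 (R : realType) (x : R) : x \is a Num.int -> `|x| < 1 -> x = 0.
Proof.
move=> Zx x1; apply/eqP; apply: contraTT x1 => x0.
by rewrite -leNgt norm_intr_ge1.
Qed.

Lemma int_of_near_int (R : realType) (x : R) :
  (forall eps, 0 < eps -> near_int eps x) -> x \is a Num.int.
Proof.
move=> near; have [k xk] : near_int (1 / 2) x by apply: near; lra.
have [->|xNk] := eqVneq x k%:~R; first exact: rpred_int.
have [l xl] : near_int `|x - k%:~R| x by apply: near; rewrite normr_gt0 subr_eq0.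
have : `|(k - l)%:~R : R| < 1.
  rewrite intrB (_ : _ - _ = (x - l%:~R) - (x - k%:~R)); last by ring.
  by apply: le_lt_trans (ler_normB _ _) _; lra.
move=> /(int_norm_lt1 (rpred_int _ _)) /eqP; rewrite intr_eq0 subr_eq0 => /eqP kl.
by move: xl; rewrite -kl ltxx.
Qed.

Section ClosedSubgroupT.
Variables (R : realType) (m : nat) (H : set 'rV[R]_m).
Hypothesis hH : closed_subgroup_T H.
Implicit Types (x y z : 'rV[R]_m) (a : 'rV[int]_m).

Lemma closed_subgroup_Tint x : intvec x -> H x.
Proof. by case: hH => _ + _; exact. Qed.

Lemma closed_subgroup_T0 : H 0.
Proof. by apply: closed_subgroup_Tint => i; rewrite mxE. Qed.

Lemma closed_subgroup_TB x y : H x -> H y -> H (x - y).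
Proof. by case: hH => _ _; exact. Qed.

Lemma closed_subgroup_TD x y : H x -> H y -> H (x + y).
Proof. exact: (subgroup_setD closed_subgroup_T0 closed_subgroup_TB). Qed.

Lemma closed_subgroup_TZ (k : int) x : H x -> H (k%:~R *: x).
Proof.
by rewrite scaler_int; exact: (subgroup_setMz closed_subgroup_T0 closed_subgroup_TB).
Qed.

Lemma closed_subgroup_Tdelta j : H (delta_mx 0 j).
Proof. by apply: closed_subgroup_Tint => i; rewrite mxE rpred_nat. Qed.

Definition floor_except j x : 'rV[R]_m :=
  \row_i (if i == j then 0 else (Num.floor (x ord0 i))%:~R).

Definition frac_except j x := x - floor_except j x.

Lemma intvec_floor_except j x : intvec (floor_except j x).
Proof. by move=> i; rewrite mxE; case: ifP; rewrite ?rpred0 ?rpred_int. Qed.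

Lemma frac_except_H j x : H x -> H (frac_except j x).
Proof.
by move=> Hx; apply: closed_subgroup_TB => //; exact/closed_subgroup_Tint/intvec_floor_except.
Qed.

Lemma frac_except_coord j x : frac_except j x ord0 j = x ord0 j.
Proof. by rewrite !mxE eqxx subr0. Qed.

Lemma zdot_frac_except a j x : exists k : int, zdot a x = zdot a (frac_except j x) + k%:~R.
Proof.
have /intrP [k kE] := zdot_int a (intvec_floor_except j x).
by exists k; rewrite zdotB -kE subrK.
Qed.

(* [frac_except j] moves any point of H into such a box without changing its
   j-th coordinate; this is how compactness enters. *)
Definition box j (lo hi : R) : set 'rV[R]_m :=
  [set v | forall i, (if i == j then `[lo, hi]%classic else `[0, 1]%classic) (v ord0 i)].

Lemma frac_except_box j x lo hi : lo <= x ord0 j <= hi -> box j lo hi (frac_except j x).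
Proof.
move=> xj i /=; case: eqP => [->|/eqP /negPf ij]; rewrite /= in_itv /=.
  by rewrite frac_except_coord.
rewrite !mxE ij subr_ge0 floor_le /=.
by have := floorD1_gt (x ord0 i); rewrite intrD; lra.
Qed.

Lemma closed_coord_image_box j lo hi (C : set 'rV[R]_m) : closed C ->
  closed ((fun x => x ord0 j) @` (box j lo hi `&` H `&` C)).
Proof.
move=> cC; apply: compact_closed; first exact: Rhausdorff.
apply: continuous_compact; first by apply: continuous_subspaceT => x; exact: coord_continuous.
apply: compact_closedI => //; apply: compact_closedI; last by case: hH.
apply: (rV_compact (A := fun i => if i == j then _ else _)) => i.
by case: ifP => _; exact: segment_compact.
Qed.

Lemma closed_coord_image j : closed ((fun x => x ord0 j) @` H).
Proof.
move=> t tcl.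
have cK := closed_coord_image_box (j := j) (lo := t - 1) (hi := t + 1) closedT.
suff [x [[_ Hx] _] <-] : ((fun x => x ord0 j) @` (box j (t - 1) (t + 1) `&` H `&` setT)) t.
  by exists x.
apply: cK => B /nbhs_ballP [e /= e0 eB].
have e10 : 0 < Num.min e 1 by rewrite lt_min e0 ltr01.
have [_ [[x Hx <-] /= xe]] := tcl _ (nbhsx_ballx t _ e10).
move: xe; rewrite /ball /= lt_min => /andP [xe]; rewrite ltr_distlC => /andP [x1 x2].
exists (x ord0 j); split; last exact: eB.
exists (frac_except j x); last exact: frac_except_coord.
by split => //; split; [apply: frac_except_box; rewrite !ltW | exact: frac_except_H].
Qed.

Lemma zdot_near_int_small_coord j a :
  annihilates (H `&` [set x | x ord0 j = 0]) a ->
  forall eps, 0 < eps -> exists2 del, 0 < del & forall z, H z ->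
    `|z ord0 j| < del -> near_int eps (zdot a z).
Proof.
move=> annH eps eps0.
pose far := \bigcap_(k in [set: int]) [set s : R | eps <= `|s - k%:~R|].
have cfar : closed far.
  apply: closed_bigI => k _.
  apply: (@preimage_closed _ _ (fun s : R => `|s - k%:~R|) _ _ (@closed_ge R eps)) => s _.
  apply: (@continuous_comp _ _ _ (fun s : R => s - k%:~R)); last exact: norm_continuous.
  by apply: continuousB; [exact: cvg_id | exact: cst_continuous].
pose P := (fun x => x ord0 j) @` (box j (-1) 1 `&` H `&` zdot a @^-1` far).
have cP : closed P.
  apply: closed_coord_image_box; apply: preimage_closed => // x _.
  exact: continuous_zdot.
have P0 : ~ P 0.
  move=> [x [[_ Hx] farx] xj].
  have /intrP [k kE] := annH x (conj Hx xj).
  by have := farx k I; rewrite /= kE subrr normr0 leNgt eps0.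
have /nbhs_ballP [d /= d0 dP] : \forall p \near (0 : R), ~ P p.
  by apply: contrapT => NP0; apply: P0; move: cP; rewrite closedE => /(_ 0); apply.
exists (Num.min d 1); first by rewrite lt_min d0 ltr01.
move=> z Hz; rewrite lt_min => /andP [zd z1].
have [k zk] := zdot_frac_except a j z.
suff [l zl] : near_int eps (zdot a (frac_except j z)).
  by exists (l + k); rewrite zk intrD opprD addrACA subrr addr0.
apply: contrapT => farz; apply: (dP (z ord0 j)); first by rewrite /ball /= sub0r normrN.
exists (frac_except j z); last exact: frac_except_coord.
split; first split.
- by apply: frac_except_box; move: z1; rewrite ltr_norml => /andP [? ?]; rewrite !ltW.
- exact: frac_except_H.
by move=> l _ /=; rewrite leNgt; apply/negP => zl; apply: farz; exists l.
Qed.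

End ClosedSubgroupT.

Lemma floor_div_bounds (R : realType) (t p : R) : 0 < p ->
  (Num.floor (t / p))%:~R * p <= t < (Num.floor (t / p))%:~R * p + p.
Proof.
move=> p0; have := floorD1_gt (t / p); rewrite intrD ltr_pdivrMr // mulrDl mul1r => ->.
by rewrite -ler_pdivlMr // floor_le.
Qed.

Section ClosedSubgroupR.
Variables (R : realType) (M : set R).
Hypotheses (closedM : closed M) (M_int : forall k : int, M k%:~R)
  (MB : forall s t, M s -> M t -> M (s - t)).

Lemma closed_subgroupR_Mz (k : int) t : M t -> M (k%:~R * t).
Proof.
rewrite mulrzl; apply: subgroup_setMz => //.
by rewrite -(mulr0z 1); exact: M_int.
Qed.

Lemma closed_subgroupR_dense :
  (forall e, 0 < e -> exists2 p, M p & 0 < p < e) -> forall t, M t.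
Proof.
move=> small t; rewrite (closure_id M).1 // => B /nbhs_ballP [e /= e0 eB].
have [p Mp /andP [p0 pe]] := small e e0.
exists ((Num.floor (t / p))%:~R * p); split; first exact: closed_subgroupR_Mz.
apply: eB; have := floor_div_bounds t p0.
by rewrite /ball /= => /andP [? ?]; rewrite ger0_norm; lra.
Qed.

Lemma closed_subgroupR_cyclic c : 0 < c -> M c -> (forall p, M p -> 0 < p -> c <= p) ->
  forall t, M t -> t = (Num.floor (t / c))%:~R * c.
Proof.
move=> c0 Mc cmin t Mt; have := floor_div_bounds t c0.
set k := (Num.floor (t / c))%:~R => /andP [kt tk].
have [r0|r0] := eqVneq (t - k * c) 0; first by apply/eqP; rewrite -subr_eq0 r0.
have Mr : M (t - k * c) by apply: MB => //; exact: closed_subgroupR_Mz.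
have := cmin _ Mr; rewrite lt_neqAle eq_sym r0 subr_ge0 kt => /(_ isT); lra.
Qed.

Lemma closed_subgroupR_cases :
  (forall t, M t) \/
  exists N : nat, (0 < N)%N /\ M N%:R^-1 /\ forall t, M t -> N%:R * t \is a Num.int.
Proof.
pose P := [set t | M t /\ 0 < t <= 1].
have M1 : M 1 by rewrite -(mulr1z 1); exact: M_int.
have lbP : has_lbound P by exists 0 => t [_ /andP [/ltW]].
have infP : has_inf P by split => //; exists 1; split; rewrite ?ltr01 ?lexx.
have [c0|] := ltP 0 (inf P); last first.
  move=> c0; left; apply: closed_subgroupR_dense => e e0.
  have [p [Mp /andP [p0 _]] pe] := inf_adherent e0 infP.
  by exists p => //; rewrite p0; lra.
set c := inf P in c0 *.
have cP p : P p -> c <= p by move=> Pp; exact: ge_inf.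
have c1 : c <= 1 by apply: cP; split; rewrite ?ltr01 ?lexx.
have cmin p : M p -> 0 < p -> c <= p.
  by move=> Mp p0; have [p1|/ltW] := leP p 1; [apply: cP; rewrite /P /= p0 p1 | lra].
have Mc : M c.
  have [p [Mp /andP [p0 p1]] pe] := inf_adherent c0 infP.
  have [<-//|pc] := eqVneq p c.
  have pc0 : 0 < p - c by have := cP p; rewrite /P /= p0 p1 => /(_ (conj Mp isT)); lra.
  have [p' [Mp' /andP [p'0 p'1]] p'e] := inf_adherent pc0 infP.
  have cp' := cmin p' Mp' p'0.
  by have := cmin (p - p') (MB Mp Mp'); lra.
have e1 := closed_subgroupR_cyclic c0 Mc cmin M1.
set k := Num.floor (1 / c) in e1.
have k0 : 0 < k by have := @ltr01 R; rewrite [X in _ < X]e1 pmulr_lgt0 // ltr0z.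
have kN : (`|k|%N)%:R = k%:~R :> R by rewrite natr_absz gtr0_norm.
right; exists `|k|%N; rewrite kN absz_gt0 gt_eqF //; split=> //; split.
  have kn0 : k%:~R != 0 :> R by rewrite intr_eq0 gt_eqF.
  by have -> : k%:~R^-1 = c by apply: (mulfI kn0); rewrite mulfV // -e1.
by move=> t Mt; rewrite (closed_subgroupR_cyclic c0 Mc cmin Mt) mulrCA -e1 mulr1 rpred_int.
Qed.

End ClosedSubgroupR.

Lemma exists_exp2_gt (R : realType) (x : R) : exists n : nat, x < 2 ^+ n.
Proof.
exists `|Num.ceil x|%N; apply: (le_lt_trans (ceil_ge x)).
apply: (le_lt_trans (y := (`|Num.ceil x|%N)%:R)).
  by rewrite natr_absz ler_int ler_norm.
by rewrite -natrX ltr_nat ltn_expl.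
Qed.

Section ContinuousCharacter.
Variables (R : realType) (m : nat) (H : set 'rV[R]_m) (j : 'I_m) (a : 'rV[int]_m).
Hypotheses (hH : closed_subgroup_T H)
  (H_onto : forall t, exists x, H x /\ x ord0 j = t)
  (annH : annihilates (H `&` [set x | x ord0 j = 0]) a).

(* Near 0 the character is lifted uniquely to (-1/4, 1/4), so halving the
   coordinate halves the lift. *)
Lemma zdot_halving : exists t0 s0 : R, 0 < t0 /\ forall n : nat,
  exists z, [/\ H z, z ord0 j = t0 / 2 ^+ n & zdot a z - s0 / 2 ^+ n \is a Num.int].
Proof.
have quarter0 : (0 : R) < 1 / 4 by lra.
have [del del0 delP] := zdot_near_int_small_coord hH annH quarter0.
have p2 n : (0 : R) < 2 ^+ n by apply: exprn_gt0; lra.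
have quarter n : exists2 z, H z /\ z ord0 j = del / 2 / 2 ^+ n &
    exists k : int, `|zdot a z - k%:~R| < 1 / 4.
  have [z [Hz zj]] := H_onto (del / 2 / 2 ^+ n); exists z => //; apply: delP => //.
  rewrite zj gtr0_norm ?divr_gt0 ?p2 // ltr_pdivrMr ?p2 //.
  by have := @ler_peMr _ (2 ^+ n) del (ltW del0) (exprn_ege1 _ (ler1n R 2)); lra.
have [z0 [Hz0 z0j] [k0 k0E]] := quarter 0%N.
exists (del / 2), (zdot a z0 - k0%:~R); split; first by rewrite divr_gt0.
set s0 := zdot a z0 - k0%:~R in k0E *.
elim=> [|n [z [Hz zj zs]]].
  by exists z0; split => //; rewrite expr0 divr1 /s0 opprB addrCA subrr addr0 rpred_int.
have [z' [Hz' z'j] [k' k'E]] := quarter n.+1.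
set s := zdot a z' - k'%:~R in k'E.
have w_int : 2 * s - s0 / 2 ^+ n \is a Num.int.
  have Hw : H (z' + z' - z) by apply: closed_subgroup_TB => //; exact: closed_subgroup_TD.
  have wj : (z' + z' - z) ord0 j = 0.
    by rewrite !mxE z'j zj exprS; field; rewrite gt_eqF ?p2.
  rewrite (_ : _ - _ = zdot a (z' + z' - z) + (zdot a z - s0 / 2 ^+ n) - (2 * k')%:~R).
    by apply: rpredB; [apply: rpredD => //; exact: annH | exact: rpred_int].
  by rewrite zdotB zdotD /s intrM; ring.
have s0n : `|s0 / 2 ^+ n| <= `|s0|.
  rewrite normrM normfV (gtr0_norm (p2 n)); apply: ler_piMr => //.
  by rewrite invf_le1 ?p2 //; apply: exprn_ege1; lra.
have s_eq : 2 * s - s0 / 2 ^+ n = 0.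
  apply: (int_norm_lt1 w_int); apply: le_lt_trans (ler_normB _ _) _.
  by rewrite normrM gtr0_norm; lra.
exists z'; split => //.
rewrite (_ : _ - _ = k'%:~R + (2 * s - s0 / 2 ^+ n) / 2); last first.
  by rewrite /s exprS; field; rewrite gt_eqF ?p2.
by rewrite s_eq mul0r addr0 rpred_int.
Qed.


Lemma zdot_linear_dyadic t0 s0 : 0 < t0 ->
  (forall n : nat, exists z,
     [/\ H z, z ord0 j = t0 / 2 ^+ n & zdot a z - s0 / 2 ^+ n \is a Num.int]) ->
  forall (n : nat) (p : int), exists w, [/\ H w, w ord0 j = p%:~R * (t0 / 2 ^+ n)
    & zdot a w - s0 / t0 * w ord0 j \is a Num.int].
Proof.
move=> t00 halve n p; have [z [Hz zj zs]] := halve n.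
exists (p%:~R *: z); split; first exact: closed_subgroup_TZ.
  by rewrite mxE zj.
rewrite zdotZ mxE zj (_ : _ - _ = p%:~R * (zdot a z - s0 / 2 ^+ n)).
  by rewrite rpredM ?rpred_int.
by field; rewrite gt_eqF ?exprn_gt0 //; lra.
Qed.

Lemma zdot_linear_of_dyadic t0 lam : 0 < t0 ->
  (forall (n : nat) (p : int), exists w, [/\ H w, w ord0 j = p%:~R * (t0 / 2 ^+ n)
    & zdot a w - lam * w ord0 j \is a Num.int]) ->
  forall z, H z -> zdot a z - lam * z ord0 j \is a Num.int.
Proof.
move=> t00 dyadic z Hz; apply: int_of_near_int => eps eps0.
have eps20 : 0 < eps / 2 by lra.
have [del del0 delP] := zdot_near_int_small_coord hH annH eps20.
have lam10 : 0 < `|lam| + 1 by rewrite ltr_wpDl.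
pose eta := Num.min del (eps / 2 / (`|lam| + 1)).
have eta0 : 0 < eta by rewrite lt_min del0 divr_gt0.
have [n tn] := exists_exp2_gt (t0 / eta).
have u0 : 0 < t0 / 2 ^+ n by rewrite divr_gt0 // exprn_gt0 //; lra.
have ueta : t0 / 2 ^+ n < eta.
  by rewrite ltr_pdivrMr ?exprn_gt0 // mulrC -ltr_pdivrMr.
have [w [Hw wj wlam]] := dyadic n (Num.floor (z ord0 j / (t0 / 2 ^+ n))).
have /andP [wz zw] := floor_div_bounds (z ord0 j) u0; rewrite -wj in wz zw.
have etadel : eta <= del by rewrite ge_min lexx.
have [k2 k2E] : near_int (eps / 2) (zdot a (z - w)).
  by apply: delP; [exact: closed_subgroup_TB | rewrite !mxE ger0_norm; lra].
have /intrP [k1 k1E] := wlam; exists (k1 + k2).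
have etalam : eta * (`|lam| + 1) <= eps / 2 by rewrite -ler_pdivlMr // ge_min lexx orbT.
have lamzw : `|lam| * `|z ord0 j - w ord0 j| <= eta * `|lam|.
  by rewrite mulrC ler_wpM2r // ger0_norm ?subr_ge0; lra.
rewrite (_ : _ - _ = (zdot a (z - w) - k2%:~R) - lam * (z ord0 j - w ord0 j) +
    (zdot a w - lam * w ord0 j - k1%:~R)); last by rewrite zdotB intrD; ring.
rewrite -k1E subrr addr0; apply: le_lt_trans (ler_normB _ _) _.
by rewrite normrM; lra.
Qed.

Lemma zdot_coord_character : exists c : int,
  forall z, H z -> zdot a z - c%:~R * z ord0 j \is a Num.int.
Proof.
have [t0 [s0 [t00 halve]]] := zdot_halving.
have lin := zdot_linear_of_dyadic t00 (zdot_linear_dyadic t00 halve).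
have := lin _ (closed_subgroup_Tdelta hH j); rewrite zdot_delta mxE !eqxx mulr1.
move=> Zd; have /intrP [c cE] : s0 / t0 \is a Num.int.
  by rewrite -(subKr (a ord0 j)%:~R (s0 / t0)); apply: rpredB => //; exact: rpred_int.
by exists c; rewrite -cE.
Qed.

End ContinuousCharacter.

Section Separation.
Variables (R : realType) (m : nat).
Implicit Types (H : set 'rV[R]_m) (x y z : 'rV[R]_m) (a : 'rV[int]_m).

Definition zero_coord (j : 'I_m) x := x - x ord0 j *: delta_mx 0 j.

Lemma zero_coordE j x i : zero_coord j x ord0 i = if i == j then 0 else x ord0 i.
Proof. by rewrite !mxE eqxx /=; case: eqP => [->|_]; rewrite ?mulr1 ?subrr ?mulr0 ?subr0. Qed.

Lemma zero_coordB j x y : zero_coord j (x - y) = zero_coord j x - zero_coord j y.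
Proof. by apply/rowP => i; rewrite !(zero_coordE, mxE); case: ifP; rewrite ?subr0. Qed.

Lemma zero_coord_id j x : x ord0 j = 0 -> zero_coord j x = x.
Proof. by move=> xj; rewrite /zero_coord xj scale0r subr0. Qed.

Lemma zero_coord_shift j i t x : zero_coord j (x + t *: delta_mx 0 i) =
  if i == j then zero_coord j x else zero_coord j x + t *: delta_mx 0 i.
Proof.
apply/rowP => k; case: (i =P j) => [->|/eqP ij]; rewrite !(zero_coordE, mxE) eqxx /=.
  by case: eqP; rewrite ?mulr0 ?addr0.
by case: ifP => // /eqP ->; rewrite eq_sym (negPf ij) mulr0 addr0.
Qed.

Lemma continuous_zero_coord j : continuous (zero_coord j).
Proof.
move=> x; apply: (@continuousB _ _ _ idfun (fun x => x ord0 j *: delta_mx 0 j)).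
  exact: cvg_id.
by apply: continuousZr_tmp; exact: coord_continuous.
Qed.

(* (H ∩ {x_j = 0}) + R e_j *)
Definition slice_cylinder j H := zero_coord j @^-1` H.

Lemma slice_sub_cylinder j H : H `&` [set x | x ord0 j = 0] `<=` slice_cylinder j H.
Proof. by move=> x [Hx xj]; rewrite /slice_cylinder /= zero_coord_id. Qed.

Lemma closed_subgroup_slice_cylinder j H :
  closed_subgroup_T H -> closed_subgroup_T (slice_cylinder j H).
Proof.
move=> hH; split.
- by apply: preimage_closed; [move=> x _; exact: continuous_zero_coord | case: hH].
- move=> x Zx; apply: (closed_subgroup_Tint hH) => i.
  by rewrite zero_coordE; case: ifP; rewrite ?rpred0.
- by move=> x y Hx Hy; rewrite /slice_cylinder /= zero_coordB; exact: closed_subgroup_TB.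
Qed.

Lemma annihilates_slice_cylinder j H a : closed_subgroup_T H ->
  annihilates (slice_cylinder j H) a -> a ord0 j = 0.
Proof.
move=> hH ann; apply/eqP; apply: contraT => aj0.
have half_in : slice_cylinder j H (2^-1 / (a ord0 j)%:~R *: delta_mx 0 j).
  rewrite /slice_cylinder /= -[X in zero_coord j X]add0r zero_coord_shift eqxx.
  by rewrite zero_coord_id ?mxE //; exact: closed_subgroup_T0.
have := ann _ half_in; rewrite zdotZ zdot_delta divfK ?intr_eq0 // => /int_norm_lt1.
by rewrite ger0_norm => [/(_ _)|]; lra.
Qed.

Definition free_below (k : nat) H :=
  forall x (i : 'I_m) t, (i < k)%N -> H x -> H (x + t *: delta_mx 0 i).

Lemma free_below_setT k H : (m <= k)%N -> closed_subgroup_T H -> free_below k H ->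
  forall y, H y.
Proof.
move=> mk hH free y; rewrite [y]row_sum_delta.
elim/big_ind: _ => [|u v Hu Hv|i _]; first exact: closed_subgroup_T0.
  by apply: closed_subgroup_TD.
rewrite -[X in H X]add0r; apply: free; first exact: leq_trans (ltn_ord i) mk.
exact: closed_subgroup_T0.
Qed.

Lemma free_below_slice_cylinder (j : 'I_m) H : free_below j H ->
  free_below j.+1 (slice_cylinder j H).
Proof.
move=> free x i t; rewrite ltnS leq_eqVlt => /orP [/eqP ij|ij] Hx.
  by rewrite /slice_cylinder /= zero_coord_shift (_ : i == j) //; apply/eqP/val_inj.
rewrite /slice_cylinder /= zero_coord_shift; case: eqP => [_|_]; first exact: Hx.
exact: free.
Qed.

End Separation.

Section SeparationStep.
Variables (R : realType) (m : nat) (H : set 'rV[R]_m) (j : 'I_m).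
Hypothesis hH : closed_subgroup_T H.
Hypothesis sepC : forall y, ~ slice_cylinder j H y -> int_separated (slice_cylinder j H) y.
Implicit Types (x y z : 'rV[R]_m).

Lemma int_separated_onto : (forall t, exists x, H x /\ x ord0 j = t) ->
  forall y, ~ H y -> int_separated H y.
Proof.
move=> onto y Hy; have [x [Hx xj]] := onto (y ord0 j).
have [b [annb byx]] : int_separated (slice_cylinder j H) (y - x).
  apply: sepC; rewrite /slice_cylinder /= zero_coord_id ?mxE ?xj ?subrr // => Hyx.
  by apply: Hy; rewrite -(subrK x y); exact: closed_subgroup_TD.
have [c bc] := zdot_coord_character hH onto (fun z Hz => annb z (slice_sub_cylinder Hz)).
exists (b - c *: delta_mx 0 j); split=> [z Hz|].
  by rewrite zdotBl zdot_deltal; exact: bc.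
rewrite zdotBl zdot_deltal; apply: contra byx => byc.
rewrite (_ : zdot b (y - x) = (zdot b y - c%:~R * y ord0 j) -
  (zdot b x - c%:~R * x ord0 j)); first by apply: rpredB => //; exact: bc.
by rewrite zdotB xj; ring.
Qed.

Lemma int_separated_discrete (N : nat) c0 : (0 < N)%N -> H c0 -> c0 ord0 j = N%:R^-1 ->
  (forall z, H z -> N%:R * z ord0 j \is a Num.int) -> forall y, ~ H y -> int_separated H y.
Proof.
move=> N0 Hc0 c0j NH y Hy; have Nn0 : (N%:R : R) != 0 by rewrite pnatr_eq0 -lt0n.
have [/intrP [p pE]|Ny] := boolP (N%:R * y ord0 j \is a Num.int); last first.
  by exists (N%:Z *: delta_mx 0 j); split=> [z Hz|]; rewrite zdot_deltal; [exact: NH|].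
have slice_off z (k : int) : N%:R * z ord0 j = k%:~R -> (z - k%:~R *: c0) ord0 j = 0.
  by move=> zk; rewrite !mxE c0j; apply: (mulfI Nn0); rewrite mulr0 mulrBr zk; field.
have H_off z (k : int) : H z -> H (z - k%:~R *: c0).
  by move=> Hz; apply: closed_subgroup_TB => //; exact: closed_subgroup_TZ.
have [b [annb byp]] : int_separated (slice_cylinder j H) (y - p%:~R *: c0).
  apply: sepC; rewrite /slice_cylinder /= zero_coord_id ?slice_off // => Hw.
  apply: Hy; rewrite -(subrK (p%:~R *: c0) y).
  by apply: closed_subgroup_TD => //; exact: closed_subgroup_TZ.
have bH z (k : int) : H z -> N%:R * z ord0 j = k%:~R ->
    zdot b z - k%:~R * zdot b c0 \is a Num.int.
  move=> Hz zk; rewrite -zdotZ -zdotB; apply: annb; apply: slice_sub_cylinder.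
  by split; [exact: H_off | exact: slice_off].
have /intrP [r rE] : N%:R * zdot b c0 \is a Num.int.
  have := bH _ N%:Z (closed_subgroup_Tdelta hH j).
  rewrite zdot_delta (annihilates_slice_cylinder hH annb) mxE !eqxx mulr1 add0r rpredN.
  by apply.
exists (b - r *: delta_mx 0 j); split=> [z Hz|]; rewrite zdotBl zdot_deltal.
  have /intrP [k zk] := NH z Hz.
  by rewrite -rE -mulrA mulrCA zk mulrC; exact: bH.
by rewrite -rE -mulrA mulrCA pE mulrC -zdotZ -zdotB.
Qed.

Lemma int_separated_step y : ~ H y -> int_separated H y.
Proof.
pose M := (fun x => x ord0 j) @` H.
have MZ (k : int) : M k%:~R.
  exists (k%:~R *: delta_mx 0 j); last by rewrite !mxE !eqxx mulr1.
  exact: (closed_subgroup_TZ hH _ (closed_subgroup_Tdelta hH j)).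
have MB s t : M s -> M t -> M (s - t).
  by move=> [x Hx <-] [z Hz <-]; exists (x - z); [exact: closed_subgroup_TB | rewrite !mxE].
have [onto|[N [N0 [[c0 Hc0 c0j] NH]]]] :=
  closed_subgroupR_cases (closed_coord_image hH (j := j)) MZ MB.
  by apply: int_separated_onto => t; have [x Hx xt] := onto t; exists x.
by apply: (int_separated_discrete N0 Hc0 c0j) => z Hz; apply: NH; exists z.
Qed.

End SeparationStep.

Theorem closed_subgroup_T_separation (R : realType) (m : nat) (H : set 'rV[R]_m) y :
  closed_subgroup_T H -> ~ H y -> int_separated H y.
Proof.
suff sep k : forall (j : nat) (H : set 'rV[R]_m), (m <= j + k)%N ->
    closed_subgroup_T H -> free_below j H -> forall y, ~ H y -> int_separated H y.
  by move=> hH; apply: (sep m 0%N) => // x i t.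
elim: k => [|k IH] j {}H mjk hH free {}y Hy.
  by rewrite addn0 in mjk; case: Hy; exact: free_below_setT mjk hH free y.
have [mj|jm] := leqP m j; first by case: Hy; exact: free_below_setT mj hH free y.
apply: (int_separated_step (j := Ordinal jm) hH) => // z.
apply: (IH j.+1); first by rewrite addSnnS.
  exact: closed_subgroup_slice_cylinder.
exact: (free_below_slice_cylinder (j := Ordinal jm) free).
Qed.

Section TimeCoordinate.
Variables (R : realType) (n : nat).

Definition split_time (x : 'rV[R]_(1 + n)) : R * 'rV[R]_n := (lsubmx x ord0 ord0, rsubmx x).

Definition join_time (th : R * 'rV[R]_n) : 'rV[R]_(1 + n) := row_mx (\row_(i < 1) th.1) th.2.

Lemma join_timeK : cancel join_time split_time.
Proof.
by case=> t v; rewrite /split_time /join_time row_mxKl row_mxKr mxE.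
Qed.

Lemma split_timeB x y : split_time (x - y) = split_time x - split_time y.
Proof. by rewrite /split_time !linearB /= !mxE. Qed.

Lemma continuous_split_time : continuous split_time.
Proof.
move=> x; apply: (@cvg_pair _ _ _ (nbhs x) (nbhs (lsubmx x ord0 ord0)) (nbhs (rsubmx x))
  (nbhs_filter x)).
  apply: (@continuous_comp _ _ _ (@lsubmx R 1 1 n) (fun M : 'M[R]_1 => M ord0 ord0)).
    exact: continuous_lsubmx.
  exact: coord_continuous.
exact: continuous_rsubmx.
Qed.

Lemma zdot_join_time (a : 'rV[int]_(1 + n)) th :
  zdot a (join_time th) = char_exponent (lsubmx a ord0 ord0) (rsubmx a) th.
Proof.
rewrite /zdot big_split_ord big_ord1 /char_exponent; congr (_ * _ + _).
- by rewrite mxE.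
- by rewrite row_mxEl mxE.
by apply: eq_bigr => i _; rewrite row_mxEr mxE.
Qed.

End TimeCoordinate.

Lemma Tqu_of_char (R : realType) (n : nat) (q : R[i]) (u : 'rV[R[i]]_n) th :
  (forall (a0 : int) (a : 'rV[int]_n), q ^ a0 * \prod_(i < n) u ord0 i ^ a ord0 i = 1 ->
     char_exponent a0 a th \is a Num.int) -> Tqu q u th.
Proof.
move=> char_int H hH quH; apply: contrapT => Hth.
pose H' := @split_time R n @^-1` H.
have hH' : closed_subgroup_T H'.
  case: hH => cH HZ HB; split.
  - by apply: preimage_closed => // x _; exact: continuous_split_time.
  - by move=> x Zx; apply: HZ => [|i]; rewrite /= mxE; exact: Zx.
  - by move=> x y Hx Hy; rewrite /H' /= split_timeB; exact: HB.
have [a [annH /negP]] : int_separated H' (join_time th).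
  by apply: closed_subgroup_T_separation; rewrite // /H' /= join_timeK.
apply; rewrite zdot_join_time; apply: char_int; apply: quH => th' Hth'.
by rewrite -zdot_join_time; apply: annH; rewrite /H' /= join_timeK.
Qed.

Section LogModulus.
Local Open Scope complex_scope.
Variable R : realType.

Lemma ln_exprz (x : R) (k : int) : 0 < x -> ln (x ^ k) = k%:~R * ln x.
Proof.
move=> x0; case: k => p /=; first by rewrite lnXn // mulrzl pmulrn.
by rewrite lnV ?posrE ?exprn_gt0 // lnXn // NegzE mulrNz mulNr mulrzl pmulrn.
Qed.

Lemma ln_prod (k : nat) (f : 'I_k -> R) : (forall i, 0 < f i) ->
  ln (\prod_i f i) = \sum_i ln (f i).
Proof.
elim: k f => [|k IH] f f0; first by rewrite !big_ord0 ln1.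
by rewrite !big_ord_recr lnM ?posrE ?prodr_gt0 // IH.
Qed.

Lemma normc_Re (x : R[i]) : `|x| = (complex.Re `|x|)%:C.
Proof. by rewrite normc_def. Qed.

Lemma Re_norm_gt0 (x : R[i]) : x != 0 -> 0 < complex.Re `|x|.
Proof. by rewrite -normr_gt0 ltcE => /andP []. Qed.

Lemma normc_exprz (x : R[i]) (k : int) : `|x ^ k| = `|x| ^ k.
Proof. by case: k => p /=; rewrite ?normfV normrX. Qed.

Lemma ln_norm_char (n : nat) (q : R[i]) (u : 'rV[R[i]]_n) (a0 : int) (a : 'rV[int]_n) :
  q != 0 -> (forall i, u ord0 i != 0) ->
  q ^ a0 * \prod_(i < n) u ord0 i ^ a ord0 i = 1 ->
  a0%:~R * ln (complex.Re `|q|) + \sum_i (a ord0 i)%:~R * ln (complex.Re `|u ord0 i|) = 0.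
Proof.
move=> q0 u0 /(congr1 (fun z => `|z|)).
rewrite normr1 normrM normr_prod normc_exprz {1}[`|q|]normc_Re -fmorphXz.
under eq_bigr do rewrite normc_exprz normc_Re -fmorphXz.
rewrite -rmorph_prod -rmorphM (_ : 1 = 1%:C) // => /complexI.
move=> /(congr1 (@ln R)); rewrite ln1 lnM ?posrE ?exprz_gt0 ?prodr_gt0 ?Re_norm_gt0 //.
- rewrite ln_exprz ?Re_norm_gt0 // ln_prod => [|i]; last by rewrite exprz_gt0 ?Re_norm_gt0.
  by under eq_bigr do rewrite ln_exprz ?Re_norm_gt0 //.
by move=> i _; rewrite exprz_gt0 ?Re_norm_gt0.
Qed.

End LogModulus.

Section LogSlope.
Local Open Scope complex_scope.
Variables (R : realType) (n : nat) (q : R[i]) (u : 'rV[R[i]]_n).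
Hypotheses (hq : 0 < `|q| < 1) (hu : forall i, u ord0 i != 0).

Definition log_slope : 'rV[R]_n :=
  \row_i (ln (complex.Re `|u ord0 i|) / ln (complex.Re `|q|)).

Lemma ln_norm_lt0 : ln (complex.Re `|q|) < 0.
Proof.
case/andP: hq => q0 q1; rewrite ln_lt0 // Re_norm_gt0 -?normr_gt0 //=.
by move: q1; rewrite normc_Re (_ : 1 = 1%:C) // ltcR.
Qed.

Lemma char_exponent_log_slope (a0 : int) (a : 'rV[int]_n) r :
  q ^ a0 * \prod_(i < n) u ord0 i ^ a ord0 i = 1 ->
  char_exponent a0 a (r, r *: log_slope) = 0.
Proof.
have q0 : q != 0 by rewrite -normr_gt0; case/andP: hq.
move=> /(ln_norm_char q0 hu) char0; rewrite /char_exponent /=.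
have lq0 : ln (complex.Re `|q|) != 0 by rewrite lt_eqF ?ln_norm_lt0.
set lq := ln (complex.Re `|q|) in char0 lq0 *.
set S := \sum_i _ in char0.
have -> : \sum_i (a ord0 i)%:~R * (r *: log_slope) ord0 i = r / lq * S.
  by rewrite mulr_sumr; apply: eq_bigr => i _; rewrite !mxE -/lq; field.
have -> : S = - (a0%:~R * lq) by apply/eqP; rewrite -addr_eq0 addrC char0.
by field.
Qed.

Lemma log_slope_Tqu r : Tqu q u (r, r *: log_slope).
Proof. by apply: Tqu_of_char => a0 a /char_exponent_log_slope ->; exact: rpred0. Qed.

End LogSlope.

Lemma line_fixed_loopE (R : realType) (n : nat) (Z : Type) (act : 'rV[R]_n -> Z -> Z)
    (v : 'rV[R]_n) (g : R -> Z) :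
  (forall s, loop_act act (s, s *: v) g = g) -> forall s, g s = act (s *: v) (g 0).
Proof.
by move=> gfix s; have := congr1 (fun f => f s) (gfix s); rewrite /loop_act /= subrr.
Qed.

Lemma continuous_torus_orbit (R : realType) (n : nat) (X : topologicalType)
    (act : 'rV[R]_n -> X -> X) (v : 'rV[R]_n) (x : X) :
  torus_action act -> continuous (fun s : R => act (s *: v) x).
Proof.
case=> act_cont _ _ _ s.
apply: (@continuous_comp _ _ _ (fun s : R => (s *: v, x)) (fun p => act p.1 p.2));
  last exact: act_cont.
apply: (@cvg_pair _ _ _ (nbhs s) (nbhs (s *: v)) (nbhs x) (nbhs_filter s)).
  by apply: continuousZr_tmp; exact: cvg_id.
exact: cvg_cst.
Qed.

Section SmashLoops.
Variables (R : realType) (n : nat) (X : topologicalType) (act : 'rV[R]_n -> X -> X).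

Lemma smash_act_pi v z x : smash_act act v (smash_pi (z, x)) = smash_pi (z, act v x).
Proof. by rewrite /smash_pi /=; case: insub. Qed.

Lemma smash_pi_val (t : {t : R | 0 < t < 1}) (x : X) : smash_pi (val t, x) = Some (t, x).
Proof.
have /andP [t0 t1] := valP t.
by rewrite /smash_pi /= (@floor_def _ _ 0) ?subr0 ?valK // add0r ltW.
Qed.

Lemma continuous_smash_loop (z : R) (gam : R -> X) :
  continuous gam -> continuous (fun s => smash_pi (z, gam s)).
Proof.
move=> gam_cont; have pair_cont : continuous (fun s : R => (z, gam s)).
  by move=> s; apply: (@cvg_pair _ _ _ (nbhs s) (nbhs z) (nbhs (gam s)));
    [exact: cvg_cst | exact: gam_cont].
apply/continuousP => A oA.
exact: ((continuousP _).1 pair_cont (@smash_pi R X @^-1` A) oA).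
Qed.

Lemma smash_Lfix_sub (q : R[i]) (u : 'rV[R[i]]_n) :
  smash_Lfix act q u `<=` Lfix (smash_act act) q u.
Proof.
move=> g [->|[z [gam [[[gam_cont gam_per] gam_fix] ->]]]].
  by split; [split; [exact: cst_continuous|] | move=> th _; apply: funext].
split; first split.
- exact: continuous_smash_loop.
- by move=> s; rewrite gam_per.
move=> th hth; apply: funext => s; rewrite /loop_act /= smash_act_pi.
by have := congr1 (fun f => f s) (gam_fix th hth); rewrite /loop_act /= => ->.
Qed.

Lemma Lfix_smash_sub (q : R[i]) (u : 'rV[R[i]]_n) :
  torus_action act -> 0 < `|q| < 1 -> (forall i, u ord0 i != 0) ->
  Lfix (smash_act act) q u `<=` smash_Lfix act q u.
Proof.
move=> Hact hq hu g [[_ g_per] g_fix].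
have gE := line_fixed_loopE (fun s => g_fix _ (log_slope_Tqu hq hu s)).
case g0: (g 0) => [[t x]|]; last by left; apply: funext => s; rewrite gE g0.
pose gam s := act (s *: log_slope q u) x.
have gam_eq (f f' : R -> X) : (fun s => Some (t, f s)) = (fun s => Some (t, f' s)) -> f = f'.
  by move=> ff'; apply: funext => s; have := congr1 (fun h => h s) ff'; case.
have g_gam : g = fun s => Some (t, gam s) by apply: funext => s; rewrite gE g0.
right; exists (val t), gam; split; last first.
  by rewrite g_gam; apply: funext => s; rewrite smash_pi_val.
split; first split.
- exact: continuous_torus_orbit.
- by move=> s; have := g_per s; rewrite g_gam; case.
by move=> th hth; apply: gam_eq; rewrite -g_gam -[RHS](g_fix th hth) g_gam.
Qed.

End SmashLoops.

Theorem mainTheorem18 (R : realType) (n : nat) (X : topologicalType)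
    (act : 'rV[R]_n -> X -> X) (Hact : torus_action act) (HCW : finite_TCW act)
    (q : R[i]) (u : 'rV[R[i]]_n)
    (hq : 0 < `|q| < 1) (hu : forall i, u ord0 i != 0) :
  Lfix (smash_act act) q u = smash_Lfix act q u.
Proof.
apply/seteqP; split; first exact: (Lfix_smash_sub Hact hq hu).
exact: smash_Lfix_sub.
Qed.
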